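(* Consider logical Bell-state measurements on two logical qubits $a,b$ encoded jointly (by a single encoder having access to both input states) into a set of physical qubits, each physical qubit being independently lost with probability $\varepsilon$. The logical Bell-state-measurement loss-tolerance threshold $\varepsilon^{(BSM)}$ of a family of such codes is at most $1$, and this bound is attained: there exists a family $\mathcal{C}$ of such two-logical-qubit codes (with $2n$ physical qubits, $n\ge 1$) such that for every $\varepsilon<1$ and every $\varepsilon'>0$ there is $C\in\mathcal{C}$ for which the logical Bell-state measurement succeeds with probability greater than $1-\varepsilon'$; i.e. $\varepsilon^{(BSM)}=1$ for this family.
   Context: A logical Bell-state measurement (BSM) on two logical qubits $a,b$ encoded by a code $C$ is the joint measurement of the two commuting logical operators $X_{aC}X_{bC}$ and $Z_{aC}Z_{bC}$, where $X,Z$ denote Pauli operators and the subscript $C$ denotes the logical operator on the code space; it succeeds if both outcomes are correctly obtained. The four Bell states are $|\Phi^\pm\rangle=(|00\rangle\pm|11\rangle)/\sqrt2$ and $|\Psi^\pm\rangle=(|01\rangle\pm|10\rangle)/\sqrt2$. A family $\mathcal{C}$ of codes has logical BSM loss threshold $\varepsilon^{(BSM)}$ equal to the supremum of values $e$ such that for every $\varepsilon<e$ and every $\varepsilon'>0$ there exists $C\in\mathcal{C}$ whose logical BSM (performed by any physically allowed measurement on the surviving physical qubits) succeeds with probability $>1-\varepsilon'$ when each physical qubit is independently lost with probability $\varepsilon$. *)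

From HB Require Import structures.
From mathcomp Require Import all_boot all_order all_algebra.
From mathcomp Require Import complex.
From mathcomp Require Import classical_sets reals.

Set Implicit Arguments.
Unset Strict Implicit.
Unset Printing Implicit Defensive.

Import Order.TTheory GRing.Theory Num.Theory.
Local Open Scope ring_scope.

Section QuantumBSM.
Variable R : realType.
Local Notation C := (R[i]).

(* Computational basis configurations of N physical qubits. *)
Definition cfg (N : nat) := {ffun 'I_N -> bool}.
(* State vectors in C^(2^N), and (matrices of) operators on C^(2^N). *)
Definition vec (N : nat) := cfg N -> C.
Definition op (N : nat) := cfg N -> cfg N -> C.

Definition inner N (psi phi : vec N) : C := \sum_x (psi x)^* * phi x.
Definition expect N (psi : vec N) (M : op N) : C :=
  \sum_x \sum_y (psi x)^* * M x y * psi y.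

(* positive semidefinite operator (over C this includes hermiticity) *)
Definition psd N (M : op N) : Prop := forall v : vec N, 0 <= expect v M.

Definition restr N (S : {set 'I_N}) (x : cfg N) : cfg N :=
  [ffun i => (i \in S) && x i].

(* M acts only on the surviving qubits S, i.e. M = E_S (x) Id_(lost qubits). *)
Definition local_on N (S : {set 'I_N}) (M : op N) : Prop :=
  exists E : op N, forall x y,
    M x y = if [forall i in ~: S, x i == y i] then E (restr S x) (restr S y)
            else 0.

(* Logical two-qubit basis |a b>, a,b : bool. *)
Definition lbasis := (bool * bool)%type.
Definition lvec := lbasis -> C.

(* A code C encoding the two logical qubits a,b jointly into N physical
   qubits: an isometry C^4 -> C^(2^N), given by the (orthonormal) images of
   the logical basis states |ab>. *)
Record code (N : nat) := Code {
  enc : lbasis -> vec N;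
  enc_orthonormal : forall i j, inner (enc i) (enc j) = (i == j)%:R
}.

Definition encode N (c : code N) (v : lvec) : vec N :=
  fun x => \sum_i v i * enc c i x.

(* Bell states, indexed by the outcome pair (sx, sz) of the measurement of
   (X_a X_b, Z_a Z_b): sx = false means eigenvalue +1 of X_a X_b, sz = false
   means eigenvalue +1 of Z_a Z_b.
   (false,false) = Phi+, (true,false) = Phi-, (false,true) = Psi+,
   (true,true) = Psi-. *)
Definition outcome := (bool * bool)%type.
Definition bell (k : outcome) : lvec := fun ab =>
  if (ab.1 (+) ab.2) == k.2 then
    (if k.1 && ab.1 then -1 else 1) / real_complex R (Num.sqrt (2 : R))
  else 0.

Definition povm_on N (S : {set 'I_N}) (M : outcome -> op N) : Prop :=
  (forall k, local_on S (M k) /\ psd (M k)) /\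
  (forall x y, \sum_k M k x y = (x == y)%:R).

(* Loss is heralded: a strategy chooses a measurement for each set S of
   surviving physical qubits. *)
Definition strategy N := {set 'I_N} -> outcome -> op N.
Definition valid_strategy N (st : strategy N) : Prop :=
  forall S, povm_on S (st S).

Definition surv_prob N (eps : R) (S : {set 'I_N}) : R :=
  eps ^+ #|~: S| * (1 - eps) ^+ #|S|.

Definition bsm_success N (c : code N) (eps : R) (st : strategy N)
    (k : outcome) : R :=
  \sum_(S : {set 'I_N}) surv_prob eps S * complex.Re (expect (encode c (bell k)) (st S k)).

Definition bsm_succeeds_gt N (c : code N) (eps p : R) : Prop :=
  exists st : strategy N, valid_strategy st /\ forall k, p < bsm_success c eps st k.

Definition code_family := set {N : nat & code N}.

Definition below_threshold (fam : code_family) (e : R) : Prop :=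
  forall eps : R, 0 <= eps <= 1 -> eps < e ->
  forall eps' : R, 0 < eps' ->
  exists2 c, fam c & bsm_succeeds_gt (projT2 c) eps (1 - eps').

Definition bsm_threshold (fam : code_family) : R :=
  sup [set e | below_threshold fam e].

End QuantumBSM.

(* Upper bound: when every physical qubit is lost the measurement acts on no
   qubit at all, so its four POVM elements are scalars summing to the identity
   and the four success probabilities sum to 1.  They cannot all exceed 1/2, so
   no e > 1 lies below the threshold of any family.

   Attainability: split 2(n+1) qubits into halves A and ~: A and encode the Bell
   state with outcome (sx, sz) as the basis state carrying sx on every qubit of A
   and sz on every qubit outside A.  Reading one surviving qubit from each half
   yields both outcomes, so the measurement fails only if a whole half is lost,
   which happens with probability at most 2 eps^(n+1). *)

From mathcomp Require Import boolp classical_sets reals.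
From mathcomp Require Import all_boot all_order all_algebra.
From mathcomp Require Import complex.
From mathcomp Require Import lra.

Set Implicit Arguments.
Unset Strict Implicit.
Unset Printing Implicit Defensive.

Import Order.TTheory GRing.Theory Num.Theory.
Local Open Scope ring_scope.

Lemma sum_pair_bool (V : nmodType) (F : bool * bool -> V) :
  \sum_p F p = F (true, true) + F (true, false) + (F (false, true) + F (false, false)).
Proof.
rewrite (eq_bigr (fun p => F (p.1, p.2))); last by case.
by rewrite -(pair_bigA _ (fun a b => F (a, b))) /= !big_bool.
Qed.

Lemma sum_delta (V : pzSemiRingType) (I : finType) (i : I) (F : I -> V) :
  \sum_j (i == j)%:R * F j = F i.
Proof.
rewrite (bigD1 i) //= eqxx mul1r big1 ?addr0 // => j /negbTE.
by rewrite eq_sym => ->; rewrite mul0r.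
Qed.

Lemma sum_setsM (V : comPzSemiRingType) (I : finType) (a b : I -> V) :
  \sum_(S : {set I}) \prod_i (if i \in S then a i else b i) = \prod_i (a i + b i).
Proof.
have -> : \prod_i (a i + b i) = \prod_i \sum_(j : bool) (if j then a i else b i).
  by apply: eq_bigr => i _; rewrite big_bool.
rewrite bigA_distr_bigA /= (reindex (fun f : {ffun I -> bool} => [set i | f i])).
  by apply: eq_bigr => f _; apply: eq_bigr => i _; rewrite inE.
exists (fun S : {set I} => [ffun i => i \in S]) => [f _ | S _].
  by apply/ffunP => i; rewrite ffunE inE.
by apply/setP => i; rewrite inE ffunE.
Qed.

Lemma bernoulli_ineq (R : realDomainType) (d : R) n :
  0 <= d -> 1 + n%:R * d <= (1 + d) ^+ n.
Proof.
move=> d_ge0; elim: n => [|n IHn]; first by rewrite mul0r addr0 expr0.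
have n_ge0 : 0 <= n%:R :> R by exact: ler0n.
rewrite exprS -natr1; nra.
Qed.

Lemma exists_exprn_lt (R : archiRealFieldType) (q e : R) :
  0 <= q < 1 -> 0 < e -> exists n, q ^+ n < e.
Proof.
case/andP=> q_ge0 q_lt1 e_gt0.
have [->|q_neq0] := eqVneq q 0; first by exists 1%N; rewrite expr1.
have q_gt0 : 0 < q by rewrite lt_def q_neq0.
pose d := q^-1 - 1.
have d_gt0 : 0 < d by rewrite subr_gt0 invf_gt1.
have [n n_gt] : exists n, (e * d)^-1 < n%:R.
  by exists (Num.Def.archi_bound (e * d)^-1); rewrite archi_boundP // invr_ge0 ltW ?mulr_gt0.
exists n.
have qd : q ^+ n * (1 + d) ^+ n = 1 by rewrite -exprMn addrC subrK divff ?expr1n.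
have := bernoulli_ineq n (ltW d_gt0).
rewrite -div1r ltr_pdivrMr ?mulr_gt0 // in n_gt.
have p_gt0 : 0 < q ^+ n by rewrite exprn_gt0.
set p := q ^+ n in qd p_gt0 *; set r := (1 + d) ^+ n in qd *.
move=> bern; have n_ge0 : 0 <= n%:R :> R by exact: ler0n.
have er : 1 < e * r by nra.
nra.
Qed.

Section Bell.
Variable R : realType.
Local Notation sqrt2 := (real_complex R (Num.sqrt (2 : R))).

Definition bell_sign (k : outcome) (ab : lbasis) : int :=
  if (ab.1 (+) ab.2) == k.2 then (if k.1 && ab.1 then -1 else 1) else 0.

Lemma bellE k ab : bell R k ab = (bell_sign k ab)%:~R / sqrt2.
Proof.
rewrite /bell /bell_sign; case: ifP => _; last by rewrite mul0r.
by case: ifP => _; rewrite ?mulrNz.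
Qed.

Lemma bell_real k ab : (bell R k ab)^* = bell R k ab.
Proof.
have sqrt2_ge0 : 0 <= sqrt2^-1 by rewrite invr_ge0 ler0c sqrtr_ge0.
by rewrite bellE rmorphM rmorph_int /= geC0_conj.
Qed.

Lemma bellM k k' ab ab' :
  bell R k ab * bell R k' ab' = (bell_sign k ab * bell_sign k' ab')%:~R / 2.
Proof.
by rewrite !bellE mulrACA -intrM -invfM -expr2 -rmorphXn sqr_sqrtr ?rmorph_nat.
Qed.

Lemma bell_orthogonal k k' : \sum_ab bell R k ab * bell R k' ab = (k == k')%:R.
Proof.
under eq_bigr do rewrite bellM.
rewrite -big_distrl -rmorph_sum sum_pair_bool /=.
by case: k k' => [[] []] [[] []]; rewrite /= ?mul0r ?divff ?pnatr_eq0.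
Qed.

Lemma bell_complete ab ab' : \sum_k bell R k ab * bell R k ab' = (ab == ab')%:R.
Proof.
under eq_bigr do rewrite bellM.
rewrite -big_distrl -rmorph_sum sum_pair_bool /=.
by case: ab ab' => [[] []] [[] []]; rewrite /= ?mul0r ?divff ?pnatr_eq0.
Qed.

End Bell.

Section Measurements.
Variables (R : realType) (N : nat).
Implicit Types (c : code R N) (v : vec R N) (d : cfg N -> R[i]).

Lemma inner_encode c (u w : lvec R) :
  inner (encode c u) (encode c w) = \sum_ab (u ab)^* * w ab.
Proof.
rewrite /inner /encode.
under eq_bigr do rewrite rmorph_sum big_distrl /=.
rewrite exchange_big /=; apply: eq_bigr => ab _.
under eq_bigr do rewrite big_distrr /=.
rewrite exchange_big /= -[RHS](sum_delta ab (fun ab' => (u ab)^* * w ab')).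
apply: eq_bigr => ab' _.
rewrite -(enc_orthonormal c) /inner mulrC big_distrr /=; apply: eq_bigr => x _.
by rewrite rmorphM /= mulrACA.
Qed.

Lemma inner_encode_bell c k : inner (encode c (bell R k)) (encode c (bell R k)) = 1.
Proof.
rewrite inner_encode; under eq_bigr do rewrite bell_real.
by rewrite bell_orthogonal eqxx.
Qed.

Definition diag_op (d : cfg N -> R[i]) : op R N := fun x y => (x == y)%:R * d x.

Lemma expect_diag_op v d : expect v (diag_op d) = \sum_x (v x)^* * v x * d x.
Proof.
apply: eq_bigr => x _; rewrite (bigD1 x) //= big1 ?addr0 => [|y /negbTE].
  by rewrite /diag_op eqxx mul1r mulrAC.
by rewrite /diag_op eq_sym => ->; rewrite mul0r mulr0 mul0r.
Qed.

Lemma local_on_set0 (M : op R N) z :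
  local_on set0 M -> M = diag_op (fun=> M z z).
Proof.
have restr0 (x : cfg N) : restr set0 x = [ffun=> false] by apply/ffunP => i; rewrite !ffunE inE.
have all_eq (x y : cfg N) : [forall i in ~: set0, x i == y i] = (x == y).
  apply/forallP/eqP => [xy | -> i]; last by rewrite eqxx implybT.
  by apply/ffunP => i; have := xy i; rewrite !inE => /eqP.
case=> E ME; apply/funext => x; apply/funext => y.
by rewrite /diag_op !ME !restr0 !all_eq eqxx; case: eqP; rewrite ?mul1r ?mul0r.
Qed.

End Measurements.

Section SurvivalProbability.
Variables (R : realType) (N : nat).
Implicit Types (S T : {set 'I_N}) (eps : R).

Lemma surv_prob_ge0 eps S : 0 <= eps <= 1 -> 0 <= surv_prob eps S.
Proof. by case/andP=> eps_ge0 eps_le1; rewrite mulr_ge0 ?exprn_ge0 ?subr_ge0. Qed.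

Lemma surv_prob1 S : surv_prob (1 : R) S = (S == set0)%:R.
Proof.
rewrite /surv_prob expr1n mul1r subrr expr0n -cards_eq0.
by case: (#|S| == 0)%N.
Qed.

Lemma surv_probE eps S :
  surv_prob eps S = \prod_i (if i \in S then 1 - eps else eps).
Proof.
rewrite /surv_prob mulrC (bigID (mem S)) /= -!prodr_const.
congr (_ * _); first by apply: eq_bigr => i ->.
by apply: eq_big => [i | i]; rewrite inE // => /negbTE ->.
Qed.

Lemma sum_surv_prob_disjoint eps T :
  \sum_S surv_prob eps S * (S :&: T == set0)%:R = eps ^+ #|T|.
Proof.
have disjE S : (S :&: T == set0)%:R = \prod_i (if i \in S :&: T then 0 else 1) :> R.
  case: eqP => [-> | /eqP/set0Pn[i iST]]; first by rewrite big1 // => i; rewrite inE.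
  by rewrite (bigD1 i) //= iST mul0r.
rewrite (eq_bigr (fun S =>
    \prod_i (if i \in S then (if i \in T then 0 else 1 - eps) else eps))); last first.
  move=> S _; rewrite surv_probE disjE -big_split; apply: eq_bigr => i _ /=.
  by rewrite inE; case: (i \in S); case: (i \in T); rewrite ?mulr0 ?mulr1.
rewrite sum_setsM -prodr_const (big_mkcond (mem T)) /=; apply: eq_bigr => i _.
by case: (i \in T); rewrite ?add0r ?subrK.
Qed.

Lemma sum_surv_prob eps : \sum_(S : {set 'I_N}) surv_prob eps S = 1.
Proof.
rewrite -[RHS](expr0 eps) -(cards0 'I_N) -sum_surv_prob_disjoint.
by apply: eq_bigr => S _; rewrite setI0 eqxx mulr1.
Qed.

End SurvivalProbability.

Section TotalLoss.
Variable R : realType.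

Lemma bsm_success_total_loss N (c : code R N) st k :
  bsm_success c 1 st k = complex.Re (expect (encode c (bell R k)) (st set0 k)).
Proof.
rewrite /bsm_success (bigD1 set0) //= surv_prob1 eqxx mul1r big1 ?addr0 //.
by move=> S /negbTE S_neq0; rewrite surv_prob1 S_neq0 mul0r.
Qed.

Lemma sum_bsm_success_total_loss N (c : code R N) (st : strategy R N) :
  valid_strategy st -> \sum_k bsm_success c 1 st k = 1.
Proof.
move=> st_valid; pose z : cfg N := [ffun=> false].
have [st_local st_povm] := st_valid set0.
have succE k : bsm_success c 1 st k = complex.Re (st set0 k z z).
  rewrite bsm_success_total_loss (local_on_set0 z (proj1 (st_local k))).
  have := inner_encode_bell c k; rewrite expect_diag_op -big_distrl /inner /= => ->.
  by rewrite /diag_op eqxx !mul1r.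
under eq_bigr do rewrite succE.
(* [Re] is additive only on the alias [Rcomplex R] of [R[i]]. *)
by rewrite -(raddf_sum (@complex.Re R : Rcomplex R -> R)) st_povm eqxx.
Qed.

Lemma below_threshold_le1 (fam : code_family R) e : below_threshold fam e -> e <= 1.
Proof.
move=> fam_e; rewrite leNgt; apply/negP => e_gt1.
have eps1 : (0 : R) <= 1 <= (1 : R) by rewrite ler01 lexx.
have half_gt0 : (0 : R) < 1 / 2 by rewrite mul1r invr_gt0 ltr0n.
have [[N c] _ [st [st_valid st_succ]]] := fam_e 1 eps1 e_gt1 (1 / 2) half_gt0.
have := sum_bsm_success_total_loss c st_valid; rewrite sum_pair_bool.
have := st_succ (true, true); have := st_succ (true, false).
have := st_succ (false, true); have := st_succ (false, false).
lra.
Qed.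

Lemma below_threshold0 (fam : code_family R) : below_threshold fam 0.
Proof. by move=> eps /andP[eps_ge0 _] /(le_lt_trans eps_ge0); rewrite ltxx. Qed.

Lemma bsm_threshold_le1 (fam : code_family R) : bsm_threshold fam <= 1.
Proof.
by apply: ge_sup; [exists 0; exact: below_threshold0 | exact: below_threshold_le1].
Qed.

Lemma bsm_threshold_eq1 (fam : code_family R) :
  below_threshold fam 1 -> bsm_threshold fam = 1.
Proof.
move=> fam1; apply/eqP; rewrite eq_le bsm_threshold_le1 /=.
by apply: sup_upper_bound => //; split; [exists 1 | exists 1; exact: below_threshold_le1].
Qed.

End TotalLoss.

Section Readout.
Variables (R : realType) (N : nat).

Definition basis_vec (z : cfg N) : vec R N := fun x => (x == z)%:R.

Lemma expect_basis_diag z d : expect (basis_vec z) (diag_op d) = d z.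
Proof.
rewrite expect_diag_op (bigD1 z) //= big1 => [|x /negbTE x_neq_z].
  by rewrite /basis_vec eqxx conjC1 !mul1r addr0.
by rewrite /basis_vec x_neq_z mulr0 mul0r.
Qed.

Definition readout (g : {set 'I_N} -> cfg N -> outcome) : strategy R N :=
  fun S k => diag_op (fun x => (g S x == k)%:R).

Lemma readout_valid g :
  (forall S x, g S (restr S x) = g S x) -> valid_strategy (readout g).
Proof.
move=> g_local S; split=> [k | x y]; last first.
  have sum_guess : \sum_k (g S x == k)%:R = 1 :> R[i].
    by rewrite -[RHS](sum_delta (g S x) (fun=> 1)); under [RHS]eq_bigr do rewrite mulr1.
  by rewrite /readout /diag_op -big_distrr /= sum_guess mulr1.
split; last first.
  move=> v; rewrite expect_diag_op; apply: sumr_ge0 => x _.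
  by rewrite mulr_ge0 ?ler0n // mulrC mul_conjC_ge0.
exists (readout g S k) => x y; rewrite /readout /diag_op g_local.
case: (x =P y) => [<- | x_neq_y].
  have -> : [forall i in ~: S, x i == x i] by apply/forallP => i; rewrite eqxx implybT.
  by rewrite eqxx.
case: forallP => [agree | _]; last by rewrite mul0r.
suff /negbTE -> : restr S x != restr S y by rewrite !mul0r.
apply/eqP => restr_xy; apply: x_neq_y; apply/ffunP => i.
have [iS | iNS] := boolP (i \in S).
  by have := congr1 (fun f : cfg N => f i) restr_xy; rewrite !ffunE iS.
by have /implyP := agree i; rewrite inE iNS => /(_ isT) /eqP.
Qed.

Lemma bsm_success_readout (c : code R N) eps g k z :
  encode c (bell R k) = basis_vec z ->
  bsm_success c eps (readout g) k = \sum_S surv_prob eps S * (g S z == k)%:R.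
Proof.
move=> ck; apply: eq_bigr => S _.
by rewrite ck expect_basis_diag; case: (g S z == k).
Qed.

End Readout.

Section BellCode.
Variables (R : realType) (N : nat) (w : outcome -> cfg N).
Hypothesis w_inj : injective w.

(* Rotates the Bell basis onto the basis states [w k]. *)
Definition bell_encoder (ab : lbasis) : vec R N :=
  fun x => \sum_k bell R k ab * basis_vec R (w k) x.

Lemma bell_encoder_orthonormal ab ab' :
  inner (bell_encoder ab) (bell_encoder ab') = (ab == ab')%:R.
Proof.
rewrite /inner /bell_encoder -bell_complete.
under eq_bigr do rewrite rmorph_sum big_distrl /=.
rewrite exchange_big /=; apply: eq_bigr => k _.
under eq_bigr do rewrite rmorphM /= bell_real conjC_nat /basis_vec eq_sym mulrAC mulrC.
rewrite sum_delta; under eq_bigr do rewrite (inj_eq w_inj) mulrC.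
by rewrite sum_delta.
Qed.

Definition bell_code : code R N := Code bell_encoder_orthonormal.

Lemma encode_bell_code k : encode bell_code (bell R k) = basis_vec R (w k).
Proof.
apply/funext => x; rewrite /encode /= /bell_encoder.
under eq_bigr do rewrite big_distrr /=.
rewrite exchange_big /= -[RHS](sum_delta k (fun k' => basis_vec R (w k') x)).
apply: eq_bigr => k' _; rewrite -bell_orthogonal big_distrl /=.
by apply: eq_bigr => ab _; rewrite mulrA.
Qed.

End BellCode.

Section RepetitionCode.
Variables (R : realType) (N : nat) (A : {set 'I_N}).

Definition rep_cfg (k : outcome) : cfg N := [ffun i => if i \in A then k.1 else k.2].

Lemma rep_cfg_inj : A != set0 -> ~: A != set0 -> injective rep_cfg.
Proof.
move=> /set0Pn[i iA] /set0Pn[j]; rewrite inE => /negbTE jNA [a b] [a' b'] eq_cfg.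
have := congr1 (fun x : cfg N => x i) eq_cfg; have := congr1 (fun x : cfg N => x j) eq_cfg.
by rewrite !ffunE iA jNA /= => -> ->.
Qed.

Definition rep_guess (S : {set 'I_N}) (x : cfg N) : outcome :=
  match [pick i in S :&: A], [pick j in S :&: ~: A] with
  | Some i, Some j => (x i, x j)
  | _, _ => (false, false)
  end.

Lemma rep_guess_restr S x : rep_guess S (restr S x) = rep_guess S x.
Proof.
rewrite /rep_guess; case: pickP => [i | //]; case: pickP => [j | //].
by rewrite !inE => /andP[jS _] /andP[iS _]; rewrite !ffunE iS jS.
Qed.

Lemma rep_guessK S k :
  S :&: A != set0 -> S :&: ~: A != set0 -> rep_guess S (rep_cfg k) = k.
Proof.
move=> /set0Pn[i0 i0SA] /set0Pn[j0 j0SAC]; rewrite /rep_guess.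
case: pickP => [i | /(_ i0)]; last by rewrite i0SA.
case: pickP => [j | /(_ j0)]; last by rewrite j0SAC.
rewrite !inE => /andP[_ jNA] /andP[_ iA].
by rewrite !ffunE iA (negbTE jNA); case: k.
Qed.

Lemma rep_code_success (A_neq0 : A != set0) (AC_neq0 : ~: A != set0) eps k :
  0 <= eps <= 1 ->
  1 - eps ^+ #|A| - eps ^+ #|~: A|
    <= bsm_success (bell_code R (rep_cfg_inj A_neq0 AC_neq0)) eps (readout R rep_guess) k.
Proof.
move=> eps01; rewrite (bsm_success_readout _ _ (encode_bell_code _ _ k)).
rewrite -[X in X - _ - _](sum_surv_prob N eps) -!sum_surv_prob_disjoint -!sumrB.
apply: ler_sum => S _; rewrite -[X in X - _ - _]mulr1 -!mulrBr ler_wpM2l ?surv_prob_ge0 //.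
have [/andP[SA SAC] | ] := boolP ((S :&: A != set0) && (S :&: ~: A != set0)).
  by rewrite (negbTE SA) (negbTE SAC) rep_guessK // eqxx !subr0.
rewrite negb_and !negbK => half_lost; apply: le_trans (ler0n _ _).
by rewrite -addrA -opprD subr_le0 -natrD ler1n addn_gt0 !lt0b.
Qed.

End RepetitionCode.

Section Halves.
Variable n : nat.

Definition first_half : {set 'I_(2 * n.+1)} :=
  widen_ord (leq_pmull n.+1 (isT : 0 < 2)%N) @: [set: 'I_n.+1].

Lemma card_first_half : #|first_half| = n.+1.
Proof. by rewrite card_imset ?cardsT ?card_ord // => i j [] /val_inj. Qed.

Lemma card_first_halfC : #|~: first_half| = n.+1.
Proof.
by apply/(@addnI n.+1); rewrite -{1}card_first_half cardsC card_ord mul2n -addnn.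
Qed.

Lemma first_half_neq0 : first_half != set0.
Proof. by rewrite -card_gt0 card_first_half. Qed.

Lemma first_halfC_neq0 : ~: first_half != set0.
Proof. by rewrite -card_gt0 card_first_halfC. Qed.

End Halves.

Definition half_rep_code (R : realType) n : code R (2 * n.+1) :=
  bell_code R (rep_cfg_inj (first_half_neq0 n) (first_halfC_neq0 n)).

Unset Implicit Arguments.
Local Open Scope classical_set_scope.

Theorem lemma3 (R : realType) :
  (forall fam : code_family R, bsm_threshold fam <= 1) /\
  exists Cf : forall n : nat, code R (2 * n.+1),
    let fam : code_family R := [set existT _ (2 * n.+1)%N (Cf n) | n in [set: nat]] in
    below_threshold fam 1 /\ bsm_threshold fam = 1.
Proof.
split; first exact: bsm_threshold_le1.
exists (half_rep_code R) => fam.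
suff fam1 : below_threshold fam 1 by split; last exact: bsm_threshold_eq1.
move=> eps eps01 eps_lt1 eps' eps'_gt0.
have [n eps_n_small] : exists n, eps ^+ n < eps' / 2.
  by apply: exists_exprn_lt; rewrite ?divr_gt0 // eps_lt1 andbT; case/andP: eps01.
exists (existT _ _ (half_rep_code R n)); first by exists n.
exists (readout R (rep_guess (first_half n))).
split; first exact/readout_valid/rep_guess_restr.
move=> k; apply: lt_le_trans (rep_code_success _ _ k eps01).
rewrite card_first_half card_first_halfC.
have : eps ^+ n.+1 <= eps ^+ n by rewrite exprS ler_piMl ?exprn_ge0; case/andP: eps01.
lra.
Qed.
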